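(* Consider the filtered ring $\mathbf{Z}[x]/(x^4)$ with $x$ in filtration exactly $d$ for some $d\ge1$, and let $R$ be a filtered $\lambda$-ring structure on it. (1) If $\psi^p_R(x)\equiv px\pmod{x^2}$ for all primes $p$, then $R$ is isomorphic to the filtered $\lambda$-ring structure with $\psi^p(x)=(1+x)^p-1$ for all primes $p$. (2) If $\psi^p_R(x)\equiv p^2x\pmod{x^2}$ for all primes $p$, then $R$ is isomorphic to one of the following $60$ mutually non-isomorphic filtered $\lambda$-ring structures on $\mathbf{Z}[x]/(x^4)$: \[S(k,d_2)=\Bigl\{\psi^p(x)=p^2x+\frac{kp^2(p^2-1)}{12}x^2+d_px^3\Bigr\},\] where $k\in\{1,5\}$, $d_2\in\{0,2,4,\ldots,58\}$, and for odd primes $p$, \[d_p=\frac{p^2(p^4-1)d_2}{60}+\frac{k^2p^2(p^2-1)(p^2-4)}{360}.\] (3) If $\psi^p_R(x)\equiv b_px\pmod{x^2}$ with $b_p\ne0$ for all primes $p$, then there are only finitely many isomorphism classes of filtered $\lambda$-ring structures $S$ on $\mathbf{Z}[x]/(x^4)$ such that $\psi^p_S(x)\equiv b_px\pmod{x^2}$ for all primes $p$. (4) If $\psi^2_R(x)\equiv 0\pmod{x^2}$, then $R$ is of the form $S((c_p),(d_p))=\{\psi^p(x)=c_px^2+d_px^3\colon p\text{ prime}\}$. Any such collection of polynomials (with integers $c_p,d_p$) gives rise to a filtered $\lambda$-ring structure provided $\psi^p(x)\equiv x^p\pmod p$ for all primes $p$. Two such, $S((c_p),(d_p))$ and $S((\bar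 c_p),(\bar d_p))$, are isomorphic if and only if (i) $(c_p)=\pm(\bar c_p)$ and (ii) there exists an integer $\alpha$ with $\bar d_p=d_p+2c_p\alpha$ for all primes $p$.
   Context: A (special) $\lambda$-ring is a commutative ring with operations $\lambda^i$ satisfying the Atiyah–Tall axioms; a filtered $\lambda$-ring is a $\lambda$-ring with decreasing filtration by ideals $I^k$ closed under $\lambda^i$, $i\ge1$; isomorphisms are filtration-preserving $\lambda$-ring isomorphisms. The filtered ring $\mathbf{Z}[x]/(x^n)$ with $x$ in filtration $d$ has $I^k$ generated by the $x^j$ with $jd\ge k$. A filtered $\lambda$-ring structure $R$ on it is determined by its Adams operations on $x$, written $\psi^p_R(x)\in\mathbf{Z}[x]/(x^n)$ for primes $p$ (polynomials without constant term); a family of such polynomials defines a filtered $\lambda$-ring structure iff $\psi^p(\psi^q(x))=\psi^q(\psi^p(x))$ and $\psi^p(x)\equiv x^p\pmod p$ for all primes $p,q$. The notation $\{\psi^p(x)=\ldots\}$ denotes the filtered $\lambda$-ring structure with these Adams operations. *)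

(* Elements of Z[x]/(x^4) are represented by their normal
   forms: polynomials in {poly int} of size <= 4. *)
From mathcomp Require Import all_boot all_algebra.
Set Implicit Arguments. Unset Strict Implicit. Unset Printing Implicit Defensive.
Import GRing.Theory Num.Theory.
Local Open Scope ring_scope.

Definition trunc4 (q : {poly int}) : {poly int} := take_poly 4 q.

(* [ev q f] : the element q(f) of Z[x]/(x^4), i.e. the image of q under the
   ring endomorphism x |-> f. *)
Definition ev (q f : {poly int}) : {poly int} := trunc4 (q \Po f).

Definition is_elt (q : {poly int}) : Prop := (size q <= 4)%N.

(* A family psi p (p prime) of polynomials without constant term, giving
   psi^p(x); it defines a filtered lambda-ring structure iff
   psi^p(psi^q(x)) = psi^q(psi^p(x)) and psi^p(x) = x^p mod p. *)
Definition is_flstruct (psi : nat -> {poly int}) : Prop :=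
  (forall p, prime p -> is_elt (psi p) /\ (psi p)`_0 = 0) /\
  (forall p q, prime p -> prime q -> ev (psi q) (psi p) = ev (psi p) (psi q)) /\
  (forall p, prime p -> forall i, (p%:Z %| (trunc4 (psi p - 'X^p))`_i)%Z).

(* filtration with x in filtration d: I^k is generated by the x^j with
   j*d >= k, i.e. g is in I^k iff its coefficients of x^j with j*d < k vanish *)
Definition in_filt (d k : nat) (g : {poly int}) : Prop :=
  forall j, (j * d < k)%N -> g`_j = 0.

(* isomorphism of filtered lambda-ring structures R -> S: a ring
   automorphism x |-> f (inverse x |-> g), preserving the filtration in both
   directions, and commuting with the Adams operations psi^p, p prime. *)
Definition fliso (d : nat) (R S : nat -> {poly int}) : Prop :=
  exists f g : {poly int},
    (is_elt f /\ is_elt g /\ f`_0 = 0 /\ g`_0 = 0) /\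
    (ev f g = 'X /\ ev g f = 'X) /\
    (forall k h, is_elt h -> in_filt d k h ->
        in_filt d k (ev h f) /\ in_filt d k (ev h g)) /\
    (forall p, prime p -> ev (R p) f = ev f (S p)).

Definition S1 (p : nat) : {poly int} := trunc4 (('X + 1) ^+ p - 1).

Definition dcoef (k d2 : int) (p : nat) : int :=
  if p == 2%N then d2 else
  ((p%:Z ^+ 2 * (p%:Z ^+ 4 - 1) * d2) %/ 60)%Z +
  ((k ^+ 2 * p%:Z ^+ 2 * (p%:Z ^+ 2 - 1) * (p%:Z ^+ 2 - 4)) %/ 360)%Z.

Definition Skd (k : int) (d2 : nat) (p : nat) : {poly int} :=
  (p%:Z ^+ 2) *: 'X + ((k * p%:Z ^+ 2 * (p%:Z ^+ 2 - 1)) %/ 12)%Z *: 'X^2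
  + dcoef k d2%:Z p *: 'X^3.

Definition Scd (c e : nat -> int) (p : nat) : {poly int} :=
  c p *: 'X^2 + e p *: 'X^3.

From mathcomp Require Import all_boot all_algebra.
From mathcomp Require Import ring zify.
Import GRing.Theory Num.Theory.
Local Open Scope ring_scope.
Set Implicit Arguments. Unset Strict Implicit. Unset Printing Implicit Defensive.

(* The elements of Z[x]/(x^4) without constant term are the jets
   a x + b x^2 + c x^3, and substitution makes them a monoid whose units are
   the jets with a = 1 or -1.  A filtered lambda-ring structure is a
   family of pairwise commuting jets psi^p, and an isomorphism is conjugation
   by a unit jet.  When the linear coefficient a of psi^2 is neither 0 nor
   a unit, the commutation equations with psi^2 determine every psi^p from
   its linear coefficient, so a structure is classified by the conjugacy
   class of psi^2 alone.  Conjugating by x + u x^2 + v x^3 reduces the other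
   two coefficients of psi^2 modulo a - a^2 and a - a^3, whence (3); for
   a = 2 and a = 4 the congruences psi^p = x^p mod p leave only S1 and the
   S(k, d2).  When a = 0, commuting with psi^2 (whose x^2 coefficient is odd)
   kills every linear coefficient, and conjugation by +-x + alpha x^2 gives
   (4). *)

Lemma eq_of_subr_eq (V : zmodType) (u v x y : V) : u = v -> x - y = u - v -> x = y.
Proof. by move=> -> /eqP; rewrite subrr subr_eq0 => /eqP. Qed.

Lemma unitz_pm1 (u v : int) : v * u = 1 -> u = 1 \/ u = -1.
Proof. by move/intUnitRing.unitzPl; rewrite qualifE => /orP[] /eqP; auto. Qed.

Definition poly4 (h0 h1 h2 h3 : int) : {poly int} :=
  h0%:P + h1 *: 'X + h2 *: 'X^2 + h3 *: 'X^3.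

Lemma size_poly4 h0 h1 h2 h3 : (size (poly4 h0 h1 h2 h3) <= 4)%N.
Proof.
rewrite /poly4.
repeat (apply: leq_trans (size_polyD _ _) _; rewrite geq_max; apply/andP; split).
- exact: leq_trans (size_polyC_leq1 _) _.
- by apply: leq_trans (size_scale_leq _ _) _; rewrite size_polyX.
- by apply: leq_trans (size_scale_leq _ _) _; rewrite size_polyXn.
- by apply: leq_trans (size_scale_leq _ _) _; rewrite size_polyXn.
Qed.

Lemma coef_poly4 h0 h1 h2 h3 i :
  (poly4 h0 h1 h2 h3)`_i =
    if i == 0%N then h0 else if i == 1%N then h1 else
    if i == 2%N then h2 else if i == 3%N then h3 else 0.
Proof.
rewrite /poly4 !coefD !coefZ coefC coefX !coefXn.
by case: i => [|[|[|[|i]]]] /=; rewrite ?mulr0 ?mulr1 ?addr0 ?add0r.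
Qed.

Lemma poly4_inj h0 h1 h2 h3 k0 k1 k2 k3 :
  poly4 h0 h1 h2 h3 = poly4 k0 k1 k2 k3 -> [/\ h0 = k0, h1 = k1, h2 = k2 & h3 = k3].
Proof.
move=> E; have C i : (poly4 h0 h1 h2 h3)`_i = (poly4 k0 k1 k2 k3)`_i by rewrite E.
by move: (C 0%N) (C 1%N) (C 2%N) (C 3%N); rewrite !coef_poly4.
Qed.

Lemma poly4_coefs q : is_elt q -> q = poly4 q`_0 q`_1 q`_2 q`_3.
Proof.
move=> Hq; apply/polyP => i; rewrite coef_poly4.
by case: i => [|[|[|[|i]]]] //=; rewrite nth_default //; apply: leq_trans Hq _.
Qed.

(* The terms of [h \Po f] beyond degree 3 are collected into a multiple of 'X^4. *)
Lemma ev_poly4 h0 h1 h2 h3 f1 f2 f3 :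
  ev (poly4 h0 h1 h2 h3) (poly4 0 f1 f2 f3) =
  poly4 h0 (h1 * f1) (h1 * f2 + h2 * f1 ^+ 2)
        (h1 * f3 + 2 * h2 * f1 * f2 + h3 * f1 ^+ 3).
Proof.
rewrite /ev /trunc4.
set G := f1%:P + f2%:P * 'X + f3%:P * 'X^2.
set H := f2%:P + f3%:P * 'X.
have -> : poly4 h0 h1 h2 h3 \Po poly4 0 f1 f2 f3 =
    poly4 h0 (h1 * f1) (h1 * f2 + h2 * f1 ^+ 2)
          (h1 * f3 + 2 * h2 * f1 * f2 + h3 * f1 ^+ 3) +
    (h2%:P * ((f2 ^+ 2 + 2 * f1 * f3)%:P + (2 * f2 * f3)%:P * 'X + (f3 ^+ 2)%:P * 'X^2)
     + h3%:P * (H * (G ^+ 2 + G * f1%:P + (f1 ^+ 2)%:P))) * 'X^4.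
  rewrite /poly4 !comp_polyD !comp_polyZ comp_polyC comp_polyX !comp_Xn_poly.
  rewrite /G /H -!mul_polyC ?polyCD ?polyCM ?polyC_exp ?polyC0 ?polyCN.
  have -> : (2 : int)%:P = 2 by rewrite polyC_natr.
  ring.
by rewrite take_polyDMXn //; apply: size_poly4.
Qed.

Record jet := Jet { jlin : int; jsq : int; jcub : int }.

Definition jet_poly (u : jet) : {poly int} := poly4 0 (jlin u) (jsq u) (jcub u).

Definition jcomp (u v : jet) : jet :=
  Jet (jlin u * jlin v) (jlin u * jsq v + jsq u * jlin v ^+ 2)
      (jlin u * jcub v + 2 * jsq u * jlin v * jsq v + jcub u * jlin v ^+ 3).

Definition jid : jet := Jet 1 0 0.

Lemma ev_jet_poly u v : ev (jet_poly u) (jet_poly v) = jet_poly (jcomp u v).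
Proof. by rewrite /jet_poly ev_poly4; congr poly4 => /=; ring. Qed.

Lemma jet_poly_inj : injective jet_poly.
Proof. by case=> a b c [a' b' c'] /poly4_inj [_ /= -> -> ->]. Qed.

Lemma jet_poly_id : jet_poly jid = 'X.
Proof. by rewrite /jet_poly /poly4 /= scale1r !scale0r !addr0 add0r. Qed.

Lemma jet_poly_coefs q : is_elt q -> q`_0 = 0 -> q = jet_poly (Jet q`_1 q`_2 q`_3).
Proof. by move=> Hq H0; rewrite {1}(poly4_coefs Hq) H0. Qed.

Lemma jcompA : associative jcomp.
Proof. by case=> a b c [a' b' c'] [a'' b'' c'']; rewrite /jcomp /=; congr Jet; ring. Qed.

Lemma jcomp1j : left_id jid jcomp.
Proof. by case=> a b c; rewrite /jcomp /=; congr Jet; ring. Qed.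

Lemma jcompj1 : right_id jid jcomp.
Proof. by case=> a b c; rewrite /jcomp /=; congr Jet; ring. Qed.

Lemma jlin_unit (f g : jet) : jcomp g f = jid -> jlin f = 1 \/ jlin f = -1.
Proof. by case=> /unitz_pm1. Qed.

Lemma jcomp_conj (f g u v : jet) : jcomp f g = jid ->
  jcomp (jcomp g (jcomp u f)) (jcomp g (jcomp v f)) = jcomp g (jcomp (jcomp u v) f).
Proof. by move=> fg; rewrite !jcompA -(jcompA _ f g) fg jcompj1. Qed.

Lemma jcomm_eqs (v w : jet) : jcomp v w = jcomp w v ->
  jsq v * (jlin w - jlin w ^+ 2) = jsq w * (jlin v - jlin v ^+ 2) /\
  jcub v * (jlin w - jlin w ^+ 3) =
    jcub w * (jlin v - jlin v ^+ 3) + 2 * jsq w * jsq v * (jlin w - jlin v).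
Proof.
case: v => A C D; case: w => a c e [_ E2 E3] /=.
by split; [apply: (eq_of_subr_eq (esym E2)) | apply: (eq_of_subr_eq (esym E3))]; ring.
Qed.

(* The jet with linear coefficient [a] solving [jcomm_eqs] against [w]; when
   [jlin w] is neither 0 nor a unit the divisions are exact for every jet
   commuting with [w], and that jet is this one. *)
Definition commutant (w : jet) (a : int) : jet :=
  let b := ((jsq w * (a - a ^+ 2)) %/ (jlin w - jlin w ^+ 2))%Z in
  Jet a b ((jcub w * (a - a ^+ 3) + 2 * jsq w * b * (jlin w - a))
             %/ (jlin w - jlin w ^+ 3))%Z.

Lemma sub_sqr_neq0 (a : int) : (1 < `|a|)%N -> a - a ^+ 2 != 0.
Proof.
move=> a2; rewrite (_ : a - a ^+ 2 = a * (1 - a)); last by ring.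
by rewrite mulf_eq0 negb_or; apply/andP; split; apply/eqP; lia.
Qed.

Lemma sub_cube_neq0 (a : int) : (1 < `|a|)%N -> a - a ^+ 3 != 0.
Proof.
move=> a2; rewrite (_ : a - a ^+ 3 = (a - a ^+ 2) * (1 + a)); last by ring.
by rewrite mulf_eq0 negb_or sub_sqr_neq0 //=; apply/eqP; lia.
Qed.

Lemma commutantP (v w : jet) : (1 < `|jlin w|)%N ->
  jcomp v w = jcomp w v -> v = commutant w (jlin v).
Proof.
move=> w2 /jcomm_eqs [E2 E3].
have Eb : jsq v = ((jsq w * (jlin v - jlin v ^+ 2)) %/ (jlin w - jlin w ^+ 2))%Z.
  by rewrite -E2 mulzK // sub_sqr_neq0.
rewrite /commutant -Eb -E3 mulzK ?sub_cube_neq0 //.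
by case: v {E2 E3 Eb}.
Qed.

Lemma jconj_commutant (f g u w w' : jet) :
  jcomp f g = jid -> jcomp g f = jid -> jcomp w f = jcomp f w' ->
  jcomp u w = jcomp w u -> (1 < `|jlin w'|)%N ->
  jcomp u f = jcomp f (commutant w' (jlin u)).
Proof.
move=> fg gf wf uw w'2.
pose T := jcomp g (jcomp u f).
have fT : jcomp f T = jcomp u f by rewrite /T jcompA fg jcomp1j.
have Ew' : w' = jcomp g (jcomp w f) by rewrite wf jcompA gf jcomp1j.
have Tw' : jcomp T w' = jcomp w' T by rewrite Ew' /T !jcomp_conj // uw.
have linT : jlin T = jlin u.
  by move: gf => [gf1 _ _]; rewrite /= mulrCA gf1 mulr1.
by rewrite -fT {1}(commutantP w'2 Tw') linT.
Qed.

Definition adams_jet (R : nat -> {poly int}) (p : nat) : jet :=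
  Jet (R p)`_1 (R p)`_2 (R p)`_3.

Lemma adams_jetE (S : nat -> {poly int}) (s : nat -> jet) p :
  S p = jet_poly (s p) -> adams_jet S p = s p.
Proof. by rewrite /adams_jet => ->; rewrite !coef_poly4; case: (s p). Qed.

Lemma coef_trunc4_subXn (P : {poly int}) p i :
  (trunc4 (P - 'X^p))`_i = if (i < 4)%N then P`_i - (i == p)%:R else 0.
Proof. by rewrite /trunc4 coef_take_poly coefB coefXn. Qed.

Section FilteredLambdaStructure.

Variable R : nat -> {poly int}.
Hypothesis HR : is_flstruct R.

Lemma flstruct_jet p : prime p -> R p = jet_poly (adams_jet R p).
Proof. by move=> pp; have [/(_ p pp) [Re R0] _] := HR; apply: jet_poly_coefs. Qed.

Lemma flstruct_comm p q : prime p -> prime q ->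
  jcomp (adams_jet R q) (adams_jet R p) = jcomp (adams_jet R p) (adams_jet R q).
Proof.
move=> pp pq; have [_ [/(_ p q pp pq) + _]] := HR.
by rewrite (flstruct_jet pp) (flstruct_jet pq) !ev_jet_poly => /jet_poly_inj.
Qed.

Lemma flstruct_cong p i : prime p -> (i < 4)%N ->
  (p%:Z %| (R p)`_i - (i == p)%:R)%Z.
Proof. by move=> pp Hi; have [_ [_ /(_ p pp i)]] := HR; rewrite coef_trunc4_subXn Hi. Qed.

End FilteredLambdaStructure.

Lemma is_flstruct_jet (psi : nat -> {poly int}) (s : nat -> jet) :
  (forall p, prime p -> psi p = jet_poly (s p)) ->
  (forall p q, prime p -> prime q -> jcomp (s q) (s p) = jcomp (s p) (s q)) ->
  (forall p, prime p -> [/\ (p%:Z %| jlin (s p))%Z,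
                            (p%:Z %| jsq (s p) - (2%N == p)%:R)%Z &
                            (p%:Z %| jcub (s p) - (3%N == p)%:R)%Z]) ->
  is_flstruct psi.
Proof.
move=> psiE scomm scong; split; [|split].
- by move=> p pp; rewrite psiE // /is_elt size_poly4 coef_poly4.
- by move=> p q pp pq; rewrite !psiE // !ev_jet_poly scomm.
move=> p pp i; rewrite coef_trunc4_subXn psiE // /jet_poly coef_poly4.
have [p1 p2 p3] := scong p pp.
have pn0 : (0 == p) = false by case: p pp {p1 p2 p3}.
have pn1 : (1 == p) = false by case: p pp pn0 {p1 p2 p3} => [|[]].
by case: i => [|[|[|[|i]]]] //=; rewrite ?pn0 ?pn1 ?subr0 ?dvdz0.
Qed.

Lemma in_filt_ev_jet d k h u :
  is_elt h -> in_filt d k h -> in_filt d k (ev h (jet_poly u)).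
Proof.
move=> Hh Hf; rewrite (poly4_coefs Hh) /jet_poly ev_poly4 => j Hj; rewrite coef_poly4.
have Z i : (i <= j)%N -> h`_i = 0.
  by move=> Hi; apply: Hf; apply: leq_ltn_trans Hj; rewrite leq_mul2r Hi orbT.
by case: j Hj Z => [|[|[|[|j]]]] //= _ Z; rewrite !Z //; ring.
Qed.

Section JetIsomorphisms.

Variables (d : nat) (R S : nat -> {poly int}) (r s : nat -> jet).
Hypotheses (Rr : forall p, prime p -> R p = jet_poly (r p))
           (Ss : forall p, prime p -> S p = jet_poly (s p)).

Lemma fliso_of_jconj (f g : jet) : jcomp f g = jid -> jcomp g f = jid ->
  (forall p, prime p -> jcomp (r p) f = jcomp f (s p)) -> fliso d R S.
Proof.
move=> fg gf rfs; exists (jet_poly f), (jet_poly g).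
split; first by rewrite /is_elt !size_poly4 !coef_poly4.
split; first by rewrite !ev_jet_poly fg gf jet_poly_id.
split; first by move=> k h Hh Hf; split; apply: in_filt_ev_jet.
by move=> p pp; rewrite Rr // Ss // !ev_jet_poly rfs.
Qed.

Lemma jconj_of_fliso : fliso d R S -> exists f g : jet,
  [/\ jcomp f g = jid, jcomp g f = jid &
      forall p, prime p -> jcomp (r p) f = jcomp f (s p)].
Proof.
move=> [F [G [[eF [eG [F0 G0]]] [[FG GF] [_ HC]]]]].
rewrite (jet_poly_coefs eF F0) (jet_poly_coefs eG G0) !ev_jet_poly -jet_poly_id in FG GF HC.
exists (Jet F`_1 F`_2 F`_3), (Jet G`_1 G`_2 G`_3); split.
- exact: jet_poly_inj FG.
- exact: jet_poly_inj GF.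
by move=> p pp; have := HC p pp; rewrite Rr // Ss // !ev_jet_poly => /jet_poly_inj.
Qed.

End JetIsomorphisms.

Lemma fliso_of_jconj2 d R S (f g : jet) : is_flstruct R -> is_flstruct S ->
  (forall p, prime p -> (R p)`_1 = (S p)`_1) -> (1 < `|jlin (adams_jet S 2)|)%N ->
  jcomp f g = jid -> jcomp g f = jid ->
  jcomp (adams_jet R 2) f = jcomp f (adams_jet S 2) -> fliso d R S.
Proof.
move=> HR HS RS S2 fg gf Hc.
apply: (fliso_of_jconj d (flstruct_jet HR) (flstruct_jet HS) fg gf) => p pp.
have S2p := flstruct_comm HS (isT : prime 2) pp.
rewrite (jconj_commutant fg gf Hc (flstruct_comm HR (isT : prime 2) pp)) //.
by rewrite [in RHS](commutantP S2 S2p) /= RS.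
Qed.

Lemma Scd_jet c e p : Scd c e p = jet_poly (Jet 0 (c p) (e p)).
Proof. by rewrite /Scd /jet_poly /poly4 scale0r !addr0 add0r. Qed.

Lemma prime_ndvdz1 (p : nat) : prime p -> ~ (p%:Z %| 1)%Z.
Proof. by move=> pp; rewrite dvdz1 absz_nat => /eqP p1; rewrite p1 in pp. Qed.

(* psi^2 has coefficient of x^2 congruent to 1 mod 2, hence nonzero, so
   commuting with it forces every linear coefficient into {0, 1}; the
   congruence psi^p = x^p mod p excludes 1. *)
Lemma flstruct_lin0_Scd R : is_flstruct R -> (R 2%N)`_1 = 0 ->
  exists c e : nat -> int, forall p, prime p -> R p = Scd c e p.
Proof.
move=> HR R21; exists (fun p => (R p)`_2), (fun p => (R p)`_3) => p pp.
rewrite Scd_jet {1}(flstruct_jet HR pp) /adams_jet; congr (jet_poly (Jet _ _ _)).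
have [+ _] := jcomm_eqs (flstruct_comm HR pp (isT : prime 2)).
rewrite /= R21 expr0n /= subr0 mulr0 => /eqP.
have c2n0 : (R 2%N)`_2 != 0.
  apply/eqP => c20; have := flstruct_cong HR (isT : prime 2) (isT : (2 < 4)%N).
  by rewrite c20 /= => /dvdzP [q]; lia.
rewrite mulf_eq0 (negbTE c2n0) /= (_ : _ - _ = (R p)`_1 * (1 - (R p)`_1)); last by ring.
rewrite mulf_eq0 subr_eq0 => /orP[/eqP // | /eqP b1].
have := flstruct_cong HR pp (isT : (1 < 4)%N).
rewrite -b1 (_ : (1 == p) = false) ?subr0; first by move/(prime_ndvdz1 pp).
by apply/negbTE; apply: contraTneq pp => <-.
Qed.

Lemma is_flstruct_Scd (c e : nat -> int) :
  (forall p, prime p -> forall i, (p%:Z %| (trunc4 (Scd c e p - 'X^p))`_i)%Z) ->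
  is_flstruct (Scd c e).
Proof.
move=> Hcong; split; last split => //.
  by move=> p _; rewrite Scd_jet /is_elt size_poly4 coef_poly4.
by move=> p q _ _; rewrite !Scd_jet !ev_jet_poly; congr (jet_poly (Jet _ _ _)) => /=; ring.
Qed.

Lemma fliso_ScdP d (c e cb eb : nat -> int) :
  fliso d (Scd c e) (Scd cb eb) <->
  ((forall p, prime p -> cb p = c p) \/ (forall p, prime p -> cb p = - c p)) /\
  (exists alpha : int, forall p, prime p -> eb p = e p + 2 * c p * alpha).
Proof.
pose r p := Jet 0 (c p) (e p); pose s p := Jet 0 (cb p) (eb p).
have Rr p (_ : prime p) : Scd c e p = jet_poly (r p) by apply: Scd_jet.
have Ss p (_ : prime p) : Scd cb eb p = jet_poly (s p) by apply: Scd_jet.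
split.
  case/(jconj_of_fliso Rr Ss) => [[f1 f2 f3] [g [_ /jlin_unit /= f1E Hc]]].
  split; last by exists f2 => p /Hc [_ _]; case: f1E => ->; lia.
  by case: f1E => f1E; [left | right] => p /Hc [_]; rewrite f1E; lia.
case=> cbE [al ebE].
have [eps [epsE cbeps]] : exists eps : int, (eps = 1 \/ eps = -1) /\
    forall p, prime p -> cb p = eps * c p.
  by case: cbE => H; [exists 1 | exists (-1)]; split; auto => p pp; rewrite H //; ring.
apply: (fliso_of_jconj d Rr Ss (f := Jet eps al 0) (g := Jet eps (- eps * al) (2 * eps * al ^+ 2))).
- by rewrite /jcomp /jid /=; case: epsE => ->; congr Jet; ring.
- by rewrite /jcomp /jid /=; case: epsE => ->; congr Jet; ring.
move=> p pp; rewrite /jcomp /= cbeps // ebE //.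
by case: epsE => ->; congr Jet; ring.
Qed.

Lemma jet_normal_form (a c e : int) : (1 < `|a|)%N ->
  exists (f g : jet) (r r2 : int),
    [/\ jcomp f g = jid, jcomp g f = jid,
        0 <= r < `|a - a ^+ 2|%N, 0 <= r2 < `|a - a ^+ 3|%N &
        jcomp (Jet a c e) f = jcomp f (Jet a r r2)].
Proof.
move=> a2; have m0 := sub_sqr_neq0 a2; have n0 := sub_cube_neq0 a2.
set m := a - a ^+ 2 in m0 *; set n := a - a ^+ 3 in n0 *.
pose q := (c %/ m)%Z; pose r := (c %% m)%Z.
pose X := e - 2 * c * q + 2 * q * a * r.
pose q2 := (X %/ n)%Z; pose r2 := (X %% n)%Z.
have Ec : c = q * m + r by rewrite /q /r -divz_eq.
have EX : X = q2 * n + r2 by rewrite /q2 /r2 -divz_eq.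
exists (Jet 1 (- q) (- q2)), (Jet 1 q (2 * q ^+ 2 + q2)), r, r2; split.
- by rewrite /jcomp /jid /=; congr Jet; ring.
- by rewrite /jcomp /jid /=; congr Jet; ring.
- by rewrite modz_ge0 // abszE ltz_mod.
- by rewrite modz_ge0 // abszE ltz_mod.
rewrite /jcomp /=; congr Jet; first by ring.
- by rewrite Ec /m; ring.
- by apply: (eq_of_subr_eq EX); rewrite /X /n; ring.
Qed.

Definition jet_residues (a : int) : seq jet :=
  let n := `|a - a ^+ 3|%N in
  [seq Jet a (i %/ n)%N (i %% n)%N | i <- iota 0 (`|a - a ^+ 2|%N * n)].

Lemma nth_jet_residues (a r r2 : int) : (1 < `|a|)%N ->
  0 <= r < `|a - a ^+ 2|%N -> 0 <= r2 < `|a - a ^+ 3|%N ->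
  exists2 i, (i < size (jet_residues a))%N & nth jid (jet_residues a) i = Jet a r r2.
Proof.
move=> a2 /andP [r0 rm] /andP [r20 r2n].
set M := `|a - a ^+ 2|%N in rm *; set N := `|a - a ^+ 3|%N in r2n *.
have r2N : (`|r2| < N)%N by lia.
have N0 : (0 < N)%N by lia.
have iMN : (`|r| * N + `|r2| < M * N)%N.
  apply: (@leq_trans (`|r| * N + N)%N); first by rewrite ltn_add2l.
  by rewrite -mulSnr leq_mul2r; apply/orP; right; lia.
exists (`|r| * N + `|r2|)%N; first by rewrite size_map size_iota.
rewrite (nth_map 0%N) ?size_iota // nth_iota // add0n.
rewrite divnMDl // divn_small // addn0 modnMDl modn_small //.
by congr Jet; lia.
Qed.

Definition flstruct_candidates (b : nat -> int) : seq (nat -> {poly int}) :=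
  [seq (fun p => jet_poly (commutant w (b p))) | w <- jet_residues (b 2%N)].

Lemma flstruct_candidatesP d (b : nat -> int) S : (forall p, prime p -> b p != 0) ->
  is_flstruct S -> (forall p, prime p -> (S p)`_1 = b p) ->
  exists i, (i < size (flstruct_candidates b))%N /\
            fliso d S (nth S1 (flstruct_candidates b) i).
Proof.
move=> bn0 HS Sb.
have b2 : (1 < `|b 2%N|)%N.
  have /dvdzP [q Hq] := flstruct_cong HS (isT : prime 2) (isT : (1 < 4)%N).
  by move: Hq (bn0 2%N isT); rewrite Sb //= subr0 => ->; lia.
have E2 : adams_jet S 2 = Jet (b 2%N) (S 2%N)`_2 (S 2%N)`_3 by rewrite /adams_jet Sb.
have [f [g [r [r2 [fg gf Hr Hr2]]]]] := jet_normal_form (S 2%N)`_2 (S 2%N)`_3 b2.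
rewrite -E2 => Hc.
have [i Hi Ei] := nth_jet_residues b2 Hr Hr2.
exists i; split; first by rewrite size_map.
rewrite (nth_map jid) // Ei.
apply: (fliso_of_jconj d (flstruct_jet HS) (fun p _ => erefl) fg gf) => p pp.
by rewrite (jconj_commutant fg gf Hc (flstruct_comm HS (isT : prime 2) pp)) //= Sb.
Qed.

Lemma dvdn_fact_prod (k m : nat) : (k`! %| \prod_(i < k) (m + i))%N.
Proof.
case: m => [|m].
  by case: k => [|k]; rewrite ?big_ord0 // big_ord_recl mul0n dvdn0.
suff -> : \prod_(i < k) (m.+1 + i) = (m + k) ^_ k by rewrite -bin_ffact dvdn_mull.
elim: k => [|k IH]; first by rewrite big_ord0 ffactn0.
by rewrite big_ord_recr IH /= addnS ffactnS [RHS]mulnC.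
Qed.

Lemma dvdz_fact_prod (k m : nat) : ((k`!)%:Z %| \prod_(i < k) (m%:Z + i%:Z))%Z.
Proof.
have -> : \prod_(i < k) (m%:Z + i%:Z) = (\prod_(i < k) (m + i))%N%:Z.
  by rewrite -[RHS]natz natr_prod; apply: eq_bigr => i _; rewrite natrD !natz.
by rewrite dvdzE !absz_nat dvdn_fact_prod.
Qed.

Lemma dvdz_sqr_sqrB1 (x : int) : (12 %| x ^+ 2 * (x ^+ 2 - 1))%Z.
Proof.
rewrite -(real_normK (num_real x)) -abszE.
case: `|x|%N => [|[|m]]; rewrite ?expr0n ?expr1n ?subrr ?mulr0 ?mul0r //.
have /dvdzP [t4 E4] := dvdz_fact_prod 4 m; have /dvdzP [t3 E3] := dvdz_fact_prod 3 (m + 1).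
move: E4 E3; rewrite !big_ord_recr !big_ord0 /= !mul1r ?addr0 ?PoszD => E4 E3.
(* with x = m + 2, x^2 (x^2 - 1) = m(m+1)(m+2)(m+3) + 2 (m+1)(m+2)(m+3) *)
apply/dvdzP; exists (2 * t4 + t3).
rewrite (_ : _ * 12 = t4 * 4`! + 2 * (t3 * 3`!)); last by rewrite !factS fact0; ring.
rewrite -E4 -E3 -addn2 PoszD; ring.
Qed.

Lemma dvdz_sqr_sqrB1_sqrB4 (x : int) : (360 %| x ^+ 2 * (x ^+ 2 - 1) * (x ^+ 2 - 4))%Z.
Proof.
rewrite -(real_normK (num_real x)) -abszE.
case: `|x|%N => [|[|m]]; rewrite ?expr0n ?expr1n ?subrr ?mulr0 ?mul0r //.
have /dvdzP [t6 E6] := dvdz_fact_prod 6 m; have /dvdzP [t5 E5] := dvdz_fact_prod 5 m.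
move: E6 E5; rewrite !big_ord_recr !big_ord0 /= !mul1r ?addr0 ?PoszD => E6 E5.
(* with x = m + 2, x^2 (x^2 - 1) (x^2 - 4) = m(m+1)...(m+5) - 3 m(m+1)...(m+4) *)
apply/dvdzP; exists (2 * t6 - t5).
rewrite (_ : _ * 360 = t6 * 6`! - 3 * (t5 * 5`!)); last by rewrite !factS fact0; ring.
rewrite -E6 -E5 -addn2 PoszD; ring.
Qed.

Lemma dvdz_sqr_expB1 (x : int) : (60 %| x ^+ 2 * (x ^+ 4 - 1))%Z.
Proof.
have /dvdzP [t1 E1] := dvdz_sqr_sqrB1_sqrB4 x; have /dvdzP [t2 E2] := dvdz_sqr_sqrB1 x.
apply/dvdzP; exists (6 * t1 + t2).
rewrite (_ : _ * 60 = t1 * 360 + 5 * (t2 * 12)); last by ring.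
by rewrite -E1 -E2; ring.
Qed.

(* Solutions of [jcomm_eqs] over Q: in a family, sq and cub are polynomials in
   the linear coefficient A, and any two members commute.  (1 + x)^A - 1 is
   the family g = -1/2, h = -1/15. *)
Definition in_jet_family (g h : rat) (u : jet) : Prop :=
  let A : rat := (jlin u)%:~R in
  (jsq u)%:~R = g * (A - A ^+ 2) /\
  (jcub u)%:~R = h * (A - A ^+ 3) + 2 / 5 * g ^+ 2 * A * (A - 1) * (A - 4).

Lemma jet_family_comm g h u v :
  in_jet_family g h u -> in_jet_family g h v -> jcomp u v = jcomp v u.
Proof.
case: u => A C D; case: v => A' C' D' [/= HC HD] [/= HC' HD'].
rewrite /jcomp /=; congr Jet; first ring; apply: (@intr_inj rat);
  rewrite /= ?(intrD, intrB, intrM, intrN, rmorphXn, rmorph_nat) ?HC ?HD ?HC' ?HD'; field; by [].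
Qed.

Lemma prime_dvdz_cancel (p N : nat) (X Y : int) : prime p -> (0 < N)%N ->
  p \notin primes N -> N%:Z * X = p%:Z * Y -> (p%:Z %| X)%Z.
Proof.
move=> pp N0 pN E; have cop : coprime p N.
  by rewrite prime_coprime //; apply: contra pN => pdvd; rewrite mem_primes pp N0.
by rewrite -(@Gauss_dvdzr p N X cop) E dvdz_mulr.
Qed.

Lemma intr_eq_div (k : nat) (c e : int) : k != 0%N -> k%:R * c = e ->
  (c%:~R : rat) = e%:~R / k%:R.
Proof.
move=> k0 <-; rewrite intrM rmorph_nat mulrAC mulfV ?mul1r //.
by rewrite pnatr_eq0.
Qed.

Definition Skd_jet (k d2 : int) (p : nat) : jet :=
  Jet (p%:Z ^+ 2) ((k * p%:Z ^+ 2 * (p%:Z ^+ 2 - 1)) %/ 12)%Z (dcoef k d2 p).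

Lemma SkdE k d2 p : Skd k d2 p = jet_poly (Skd_jet k d2%:Z p).
Proof. by rewrite /Skd /jet_poly /poly4 /= polyC0 add0r. Qed.

Lemma Skd_jsqE k d2 p : 12 * jsq (Skd_jet k d2 p) = k * p%:Z ^+ 2 * (p%:Z ^+ 2 - 1).
Proof. by rewrite /= mulrC divzK // -mulrA dvdz_mull // dvdz_sqr_sqrB1. Qed.

(* [dcoef] treats p = 2 apart, but the identity holds there too: both sides
   are 360 * d2. *)
Lemma Skd_jcubE k d2 p : 360 * jcub (Skd_jet k d2 p) =
  6 * p%:Z ^+ 2 * (p%:Z ^+ 4 - 1) * d2 + k ^+ 2 * p%:Z ^+ 2 * (p%:Z ^+ 2 - 1) * (p%:Z ^+ 2 - 4).
Proof.
rewrite /= /dcoef; case: eqP => [-> | _]; first by ring.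
set X := _ * _ * d2; set Y := k ^+ 2 * _ * _ * _.
have d60 : (60 %| X)%Z by rewrite dvdz_mulr // dvdz_sqr_expB1.
have d360 : (360 %| Y)%Z.
  have -> : Y = k ^+ 2 * (p%:Z ^+ 2 * (p%:Z ^+ 2 - 1) * (p%:Z ^+ 2 - 4)) by rewrite /Y; ring.
  by rewrite dvdz_mull // dvdz_sqr_sqrB1_sqrB4.
rewrite mulrDr [360 * (Y %/ 360)%Z]mulrC divzK // (_ : 360 = 6 * 60) // -mulrA.
by rewrite [60 * _]mulrC divzK // /X; ring.
Qed.

Lemma Skd_jet_family k d2 p :
  in_jet_family (- k%:~R / 12) (- d2%:~R / 60) (Skd_jet k d2 p).
Proof.
have /(@intr_eq_div 12 _ _ isT) HC := Skd_jsqE k d2 p.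
have /(@intr_eq_div 360 _ _ isT) HD := Skd_jcubE k d2 p.
by split; rewrite ?HC ?HD /= ?(intrD, intrB, intrM, intrN, rmorphXn, rmorph_nat); field; by [].
Qed.

Lemma Skd_jsq_cong k d2 p : (k = 1 \/ k = 5) -> prime p ->
  (p%:Z %| jsq (Skd_jet k d2 p) - (2%N == p)%:R)%Z.
Proof.
move=> Hk pp; have E := Skd_jsqE k d2 p.
have [E2 | n2] := eqVneq 2%N p; first subst p.
  have {}E : 12 * jsq (Skd_jet k d2 2%N) = 12 * k by rewrite E; ring.
  by case: Hk => Ek /=; lia.
rewrite mulr0n subr0; have [E3 | n3] := eqVneq 3%N p; first subst p.
  have {}E : 12 * jsq (Skd_jet k d2 3%N) = 72 * k by rewrite E; ring.
  by lia.
apply: (@prime_dvdz_cancel p 12 _ (k * p%:Z * (p%:Z ^+ 2 - 1))) => //.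
  by rewrite (_ : primes 12 = [:: 2; 3]) // !inE negb_or !(eq_sym p) n2.
by rewrite E; ring.
Qed.

Lemma Skd_jcub_cong k d2 p : (k = 1 \/ k = 5) -> ~~ odd d2 -> prime p ->
  (p%:Z %| jcub (Skd_jet k d2%:Z p) - (3%N == p)%:R)%Z.
Proof.
move=> Hk Hd pp; have E := Skd_jcubE k d2%:Z p.
have [E2 | n2] := eqVneq 2%N p; first subst p.
  have {}E : 360 * jcub (Skd_jet k d2%:Z 2%N) = 360 * d2%:Z by rewrite E; ring.
  by rewrite /= subr0; lia.
have [E3 | n3] := eqVneq 3%N p; first subst p.
  have {}E : jcub (Skd_jet k d2%:Z 3%N) = 12 * d2%:Z + k ^+ 2.
    by apply: (@mulfI _ 360) => //; rewrite E; ring.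
  by case: Hk => -> in E *; lia.
rewrite mulr0n subr0; have [E5 | n5] := eqVneq 5%N p; first subst p.
  have {}E : jcub (Skd_jet k d2%:Z 5%N) = 260 * d2%:Z + 35 * k ^+ 2.
    by apply: (@mulfI _ 360) => //; rewrite E; ring.
  by case: Hk => -> in E *; lia.
apply: (@prime_dvdz_cancel p 360 _ (6 * p%:Z * (p%:Z ^+ 4 - 1) * d2%:Z
                                     + k ^+ 2 * p%:Z * (p%:Z ^+ 2 - 1) * (p%:Z ^+ 2 - 4))) => //.
  by rewrite (_ : primes 360 = [:: 2; 3; 5]) // !inE !negb_or !(eq_sym p) n2 n3.
by rewrite E; ring.
Qed.

Lemma is_flstruct_Skd (k : int) (d2 : nat) : (k = 1 \/ k = 5) -> ~~ odd d2 ->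
  is_flstruct (Skd k d2).
Proof.
move=> Hk Hd; apply: (is_flstruct_jet (s := Skd_jet k d2)) => [p _ | p q _ _ | p pp].
- exact: SkdE.
- exact: jet_family_comm (Skd_jet_family _ _ _) (Skd_jet_family _ _ _).
by split; [rewrite /= dvdz_mulr | apply: Skd_jsq_cong | apply: Skd_jcub_cong].
Qed.

Lemma coef_XaddC1_exp (p i : nat) : (('X + 1) ^+ p : {poly int})`_i = 'C(p, i)%:R.
Proof.
have E (j : nat) : ('X^j *+ 'C(p, j) : {poly int})`_i = if j == i then 'C(p, j)%:R else 0.
  by rewrite coefMn coefXn; case: eqVneq => //= _; rewrite mul0rn.
rewrite exprD1n coef_sum (eq_bigr _ (fun (j : 'I_p.+1) _ => E j)) -big_mkcond.
rewrite (big_ord1_eq _ (fun j => 'C(p, j)%:R : int)).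
by case: ltnP => // pi; rewrite bin_small.
Qed.

Definition S1_jet (p : nat) : jet := Jet p%:Z 'C(p, 2)%:Z 'C(p, 3)%:Z.

Lemma S1E p : S1 p = jet_poly (S1_jet p).
Proof.
apply/polyP => i; rewrite /S1 /trunc4 coef_take_poly /jet_poly coef_poly4 coefB.
rewrite coef_XaddC1_exp coefC.
by case: i => [|[|[|[|i]]]] //=; rewrite ?subr0 ?bin0 ?bin1 ?natz.
Qed.

Lemma S1_jet_family p : in_jet_family (- 1 / 2) (- 1 / 15) (S1_jet p).
Proof.
have [E2 E3] : 2 * 'C(p, 2)%:Z = p%:Z * (p%:Z - 1) /\
               6 * 'C(p, 3)%:Z = p%:Z * (p%:Z - 1) * (p%:Z - 2).
  case: p => [|[|m]]; try by split; rewrite bin_small //; ring.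
  have := bin_ffact m.+2 2; have := bin_ffact m.+2 3; rewrite !ffactnS !ffactn0 /=.
  by rewrite (_ : 3`! = 6)%N // (_ : 2`! = 2)%N // => E3 E2; split; lia.
move: E2 E3 => /(@intr_eq_div 2 _ _ isT) E2 /(@intr_eq_div 6 _ _ isT) E3.
by split; rewrite /= ?E2 ?E3 ?(intrD, intrB, intrM, intrN, rmorphXn, rmorph_nat); field; by [].
Qed.

Lemma dvdz_bin_prime (p k : nat) : prime p -> (0 < k)%N ->
  (p%:Z %| 'C(p, k)%:Z - (k == p)%:R)%Z.
Proof.
move=> pp k0; case: (ltngtP k p) => [kp | pk | ->]; last by rewrite binn subrr.
- by rewrite subr0 dvdzE !absz_nat prime_dvd_bin // k0.
by rewrite bin_small // subr0.
Qed.

Lemma is_flstruct_S1 : is_flstruct S1.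
Proof.
apply: (is_flstruct_jet (s := S1_jet)) => [p _ | p q _ _ | p pp]; first exact: S1E.
  exact: jet_family_comm (S1_jet_family q) (S1_jet_family p).
by split; rewrite /= ?dvdzz // dvdz_bin_prime.
Qed.

Lemma S1_psi2_normal_form (c e : int) :
  (2 %| c - 1)%Z -> (2 %| e)%Z -> (3 %| 4 * e + c ^+ 2 - 1)%Z ->
  exists f g : jet,
    [/\ jcomp f g = jid, jcomp g f = jid & jcomp (Jet 2 c e) f = jcomp f (S1_jet 2)].
Proof.
move=> /dvdzP [u Hu] /dvdzP [v Hv] /dvdzP [w Hw].
have {Hu} Ec : c = 1 + 2 * u by lia.
have {Hv} Ee : e = 2 * v by lia.
subst c e.
have {}Hw : w * 3 = 8 * v + 4 * (u ^+ 2) + 4 * u by rewrite -Hw; ring.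
have [s Hs] : exists s, w = 2 * s by exists (w %/ 2)%Z; lia.
exists (Jet 1 u (s - v - u)), (Jet 1 (- u) (2 * u ^+ 2 - (s - v - u))); split.
- by rewrite /jcomp /jid /=; congr Jet; ring.
- by rewrite /jcomp /jid /=; congr Jet; ring.
rewrite /jcomp /S1_jet /= binn bin_small //; congr Jet; first by ring.
by apply: (eq_of_subr_eq (esym Hw)); rewrite Hs; ring.
Qed.

Lemma fliso_S1 d R : is_flstruct R -> (forall p, prime p -> (R p)`_1 = p%:Z) ->
  fliso d R S1.
Proof.
move=> HR Hb; set c := (R 2%N)`_2; set e := (R 2%N)`_3.
have R2 : adams_jet R 2 = Jet 2 c e by rewrite /adams_jet Hb.
have [E2 E3] := jcomm_eqs (flstruct_comm HR (isT : prime 3) (isT : prime 2)).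
rewrite R2 /= Hb //= in E2 E3.
have {E2} : 2 * (R 3%N)`_2 = 2 * (3 * c).
  by apply: (eq_of_subr_eq E2); ring.
move=> E2; have c3E : (R 3%N)`_2 = 3 * c by lia.
have {E3} : 6 * (R 3%N)`_3 = 6 * (4 * e + c ^+ 2).
  by apply: (eq_of_subr_eq E3); rewrite c3E; ring.
set C2 := c ^+ 2 => E3; have e3E : (R 3%N)`_3 = 4 * e + C2 by lia.
have c2 := flstruct_cong HR (isT : prime 2) (isT : (2 < 4)%N).
have e2 := flstruct_cong HR (isT : prime 2) (isT : (3 < 4)%N).
have e3 := flstruct_cong HR (isT : prime 3) (isT : (3 < 4)%N).
rewrite e3E /= subr0 in c2 e2 e3.
have [f [g [fg gf Hc]]] := S1_psi2_normal_form c2 e2 e3.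
apply: (fliso_of_jconj2 d HR is_flstruct_S1 _ _ fg gf).
- by move=> p pp; rewrite Hb // S1E coef_poly4.
- by rewrite (adams_jetE (S1E 2)).
by rewrite R2 (adams_jetE (S1E 2)).
Qed.

Lemma Skd_jet2 k d2 : Skd_jet k d2 2 = Jet 4 k d2.
Proof.
rewrite /Skd_jet /dcoef /= (_ : k * 2%:Z ^+ 2 * _ = k * 12) ?mulzK //.
by rewrite /= expr2; ring.
Qed.

Lemma units_mod12 (c : int) : (2 %| c - 1)%Z -> ~ (3 %| c)%Z ->
  exists eps k beta : int, [/\ eps = 1 \/ eps = -1, k = 1 \/ k = 5 & c = eps * k + 12 * beta].
Proof.
move=> c2 c3; have : c = (c %/ 12)%Z * 12 + (c %% 12)%Z by rewrite -divz_eq.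
have : 0 <= (c %% 12)%Z < 12 by rewrite modz_ge0 ?ltz_pmod.
set q := (c %/ 12)%Z; set r := (c %% 12)%Z => r12 Ec.
have : r = 1 \/ r = 5 \/ r = 7 \/ r = 11 by lia.
case=> [Er|[Er|[Er|Er]]].
- by exists 1, 1, q; split; [left | left | lia].
- by exists 1, 5, q; split; [left | right | lia].
- by exists (-1), 5, (q + 1); split; [right | right | lia].
- by exists (-1), 1, (q + 1); split; [right | left | lia].
Qed.

Lemma Skd_psi2_normal_form (c e : int) : (2 %| c - 1)%Z -> (2 %| e)%Z -> ~ (3 %| c)%Z ->
  exists (k : int) (d2 : nat), [/\ k = 1 \/ k = 5, (d2 < 60)%N, ~~ odd d2 &
    exists f g : jet, [/\ jcomp f g = jid, jcomp g f = jid &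
                          jcomp (Jet 4 c e) f = jcomp f (Jet 4 k d2%:Z)]].
Proof.
move=> c2 e2 c3; have [eps [k [beta [epsE kE Ec]]]] := units_mod12 c2 c3.
pose X := 2 * c * beta + e - 8 * eps * beta * k.
have EX : X = (X %/ 60)%Z * 60 + (X %% 60)%Z by rewrite -divz_eq.
have : 0 <= (X %% 60)%Z < 60 by rewrite modz_ge0 ?ltz_pmod.
set q := (X %/ 60)%Z in EX *; set r := (X %% 60)%Z in EX * => r60.
have r2 : (2 %| r)%Z.
  have : (2 %| X)%Z.
    have -> : X = 2 * (c * beta - 4 * eps * beta * k) + e by rewrite /X; ring.
    by move: e2; set Y := c * beta - _; lia.
  by rewrite EX; lia.
exists k, `|r|%N; split => //; [lia | lia |].
have Er : `|r|%N%:Z = r by lia.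
exists (Jet eps beta (eps * q)), (Jet eps (- eps * beta) (2 * eps * beta ^+ 2 - eps * q)).
rewrite Er /jcomp /jid /=; rewrite /X in EX.
case: epsE => epsE; rewrite Ec epsE in EX *; split; congr Jet; try ring.
- by apply: (eq_of_subr_eq EX); ring.
- by apply: (eq_of_subr_eq (esym EX)); ring.
Qed.

Lemma exists_fliso_Skd d R : is_flstruct R -> (forall p, prime p -> (R p)`_1 = p%:Z ^+ 2) ->
  exists (k : int) (d2 : nat),
    (k = 1 \/ k = 5) /\ (d2 < 60)%N /\ ~~ odd d2 /\ fliso d R (Skd k d2).
Proof.
move=> HR Hb; set c := (R 2%N)`_2; set e := (R 2%N)`_3.
have R2 : adams_jet R 2 = Jet 4 c e by rewrite /adams_jet Hb.
have [E2 E3] := jcomm_eqs (flstruct_comm HR (isT : prime 3) (isT : prime 2)).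
rewrite R2 /= Hb //= in E2 E3.
have {E2} : 12 * (R 3%N)`_2 = 12 * (6 * c) by apply: (eq_of_subr_eq E2); ring.
move=> E2; have c3E : (R 3%N)`_2 = 6 * c by lia.
have {E3} : 60 * (R 3%N)`_3 = 60 * (12 * e + c ^+ 2).
  by apply: (eq_of_subr_eq E3); rewrite c3E; ring.
set C2 := c ^+ 2 => E3; have e3E : (R 3%N)`_3 = 12 * e + C2 by lia.
have c2 := flstruct_cong HR (isT : prime 2) (isT : (2 < 4)%N).
have e2 := flstruct_cong HR (isT : prime 2) (isT : (3 < 4)%N).
have e3 := flstruct_cong HR (isT : prime 3) (isT : (3 < 4)%N).
rewrite e3E /= subr0 in c2 e2 e3.
have c3 : ~ (3 %| c)%Z.
  move=> /dvdzP [z Ez]; move: e3; rewrite /C2 Ez.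
  rewrite (_ : (z * 3) ^+ 2 = 3 * (3 * z ^+ 2)); last by ring.
  set Z := z ^+ 2; lia.
have [k [d2 [kE d2E d2ev [f [g [fg gf Hc]]]]]] := Skd_psi2_normal_form c2 e2 c3.
exists k, d2; do 3!split => //.
have S2 := adams_jetE (SkdE k d2 2); rewrite Skd_jet2 in S2.
apply: (fliso_of_jconj2 d HR (is_flstruct_Skd kE d2ev) _ _ fg gf).
- by move=> p pp; rewrite Hb // SkdE coef_poly4.
- by rewrite S2.
by rewrite R2 S2.
Qed.

Lemma fliso_Skd_inj d (k k' : int) (d2 d2' : nat) :
  (k = 1 \/ k = 5) -> (k' = 1 \/ k' = 5) -> (d2 < 60)%N -> (d2' < 60)%N ->
  fliso d (Skd k d2) (Skd k' d2') -> k = k' /\ d2 = d2'.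
Proof.
move=> kE k'E d2E d2'E.
move/(jconj_of_fliso (fun p _ => SkdE k d2 p) (fun p _ => SkdE k' d2' p)).
case=> [[f1 f2 f3] [g [_ /jlin_unit /= f1E /(_ 2%N isT)]]].
rewrite !Skd_jet2 /jcomp /= => -[_ Esq Ecub].
by move: Esq Ecub; case: kE k'E f1E => -> [] -> [] -> Esq Ecub; split; lia.
Qed.

Theorem theorem1p6 (d : nat) (R : nat -> {poly int}) :
  (1 <= d)%N -> is_flstruct R ->
  (* (1) *)
  ((forall p, prime p -> (R p)`_1 = p%:Z) ->
     is_flstruct S1 /\ fliso d R S1) /\
  (* (2) *)
  ((forall p, prime p -> (R p)`_1 = p%:Z ^+ 2) ->
     (forall (k : int) (d2 : nat), (k = 1 \/ k = 5) -> (d2 < 60)%N -> ~~ odd d2 ->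
        is_flstruct (Skd k d2)) /\
     (forall (k k' : int) (d2 d2' : nat),
        (k = 1 \/ k = 5) -> (d2 < 60)%N -> ~~ odd d2 ->
        (k' = 1 \/ k' = 5) -> (d2' < 60)%N -> ~~ odd d2' ->
        fliso d (Skd k d2) (Skd k' d2') -> k = k' /\ d2 = d2') /\
     (exists (k : int) (d2 : nat), (k = 1 \/ k = 5) /\ (d2 < 60)%N /\ ~~ odd d2 /\
        fliso d R (Skd k d2))) /\
  (* (3) *)
  (forall b : nat -> int, (forall p, prime p -> b p != 0) ->
     (forall p, prime p -> (R p)`_1 = b p) ->
     exists L : seq (nat -> {poly int}),
       forall S, is_flstruct S -> (forall p, prime p -> (S p)`_1 = b p) ->
         exists i, (i < size L)%N /\ fliso d S (nth S1 L i)) /\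
  (* (4) *)
  (((R 2%N)`_1 = 0 ->
      exists c e : nat -> int, forall p, prime p -> R p = Scd c e p) /\
   (forall c e : nat -> int,
      (forall p, prime p -> forall i, (p%:Z %| (trunc4 (Scd c e p - 'X^p))`_i)%Z) ->
      is_flstruct (Scd c e)) /\
   (forall c e cb eb : nat -> int,
      is_flstruct (Scd c e) -> is_flstruct (Scd cb eb) ->
      (fliso d (Scd c e) (Scd cb eb) <->
        ((forall p, prime p -> cb p = c p) \/ (forall p, prime p -> cb p = - c p)) /\
        (exists alpha : int, forall p, prime p -> eb p = e p + 2 * c p * alpha)))).
Proof.
move=> _ HR; split; [|split; [|split]].
- by move=> Hb; split; [exact: is_flstruct_S1 | exact: fliso_S1].
- move=> Hb; split; first by move=> k d2 Hk _ Hd; exact: is_flstruct_Skd.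
  split; last exact: exists_fliso_Skd.
  by move=> k k' d2 d2' Hk Hd _ Hk' Hd' _; exact: fliso_Skd_inj Hk Hk' Hd Hd'.
- by move=> b bn0 _; exists (flstruct_candidates b) => S HS Sb; exact: flstruct_candidatesP.
split; first exact: flstruct_lin0_Scd.
split; first exact: is_flstruct_Scd.
by move=> c e cb eb _ _; exact: fliso_ScdP.
Qed.
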